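(* Let $m\ge2$ be an integer and let $a,b,c,d$ be complex roots of unity. Then $$1-\frac{(a+b)(c+d)}{m}-\frac{abcd}{m^2}\neq0.$$ *)

From mathcomp Require Import all_boot all_algebra all_field.
Set Implicit Arguments. Unset Strict Implicit. Unset Printing Implicit Defensive.
Import GRing.Theory Num.Theory.
Local Open Scope ring_scope.

(* A complex root of unity: z^n = 1 for some positive n. Complex numbers are
   modelled by algC (roots of unity are algebraic, so this loses nothing). *)
Definition is_root_of_unity (z : algC) : Prop := exists2 n : nat, (0 < n)%N & z ^+ n = 1.

From mathcomp Require Import all_boot all_algebra all_field.
From mathcomp Require Import ring.
Import GRing.Theory Num.Theory.
Local Open Scope ring_scope.

(* Roots of unity are units of the ring of algebraic integers.  If the
   expression vanished, then 1/m = (abcd)^-1 (m - (a+b)(c+d)) would be an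
   algebraic integer; being rational it would be an integer, impossible for
   m >= 2. *)

Section RootOfUnity.

Variable z : algC.
Hypothesis zU : is_root_of_unity z.

Lemma root_of_unity_Aint : z \in Aint.
Proof. by case: zU => n n0 zn; apply: (Aint_unity_root n0); rewrite unity_rootE zn. Qed.

Lemma root_of_unity_neq0 : z != 0.
Proof. by case: zU => n n0 zn; rewrite -unitfE -(unitrX_pos z n0) zn unitr1. Qed.

Lemma root_of_unity_invAint : z^-1 \in Aint.
Proof.
case: zU => n n0 zn.
suff -> : z^-1 = z ^+ n.-1 by apply/rpredX/root_of_unity_Aint.
by rewrite -[z^-1]mulr1 -zn -(prednK n0) exprS mulKf ?root_of_unity_neq0.
Qed.

End RootOfUnity.

Lemma inv_natr_Aint {m : nat} : (1 < m)%N -> (m%:R : algC)^-1 \notin Aint.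
Proof.
move=> m_gt1; apply/negP => mA.
have mQ : (m%:R : algC)^-1 \in Crat by rewrite rpredV rpred_nat.
have : (m%:R : algC)^-1 \in Num.nat.
  by rewrite natrEint (Cint_rat_Aint mQ mA) invr_ge0 ler0n.
case/natrP => k km.
have : ((k * m)%:R : algC) = 1%:R by rewrite natrM -km mulVf // pnatr_eq0 -lt0n ltnW.
by move/eqP; rewrite eqr_nat muln_eq1 => /andP[_ /eqP m1]; rewrite m1 in m_gt1.
Qed.

Lemma inv_eq_of_quadratic_eq0 {F : fieldType} {x s u : F} :
  x != 0 -> u != 0 -> 1 - s / x - u / x ^+ 2 = 0 -> x^-1 = u^-1 * (x - s).
Proof.
move=> x0 u0 E.
have ux : u = x * (x - s).
  have : (1 - s / x - u / x ^+ 2) * x ^+ 2 = x * (x - s) - u by field.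
  by rewrite E mul0r => /esym/eqP; rewrite subr_eq0 => /eqP.
have xs0 : x - s != 0 by apply: contra_neq u0; rewrite ux => ->; rewrite mulr0.
by rewrite ux invfM -mulrA mulVf ?mulr1.
Qed.

Theorem lemma7p3 (m : nat) (a b c d : algC) :
  (2 <= m)%N ->
  is_root_of_unity a -> is_root_of_unity b ->
  is_root_of_unity c -> is_root_of_unity d ->
  1 - (a + b) * (c + d) / m%:R - (a * b * c * d) / (m%:R ^+ 2) != 0.
Proof.
move=> m_gt1 aU bU cU dU; apply/eqP => E.
have m0 : (m%:R : algC) != 0 by rewrite pnatr_eq0 -lt0n ltnW.
have u0 : a * b * c * d != 0 by rewrite !mulf_neq0 ?root_of_unity_neq0.
have uA : (a * b * c * d)^-1 \in Aint.
  by rewrite !invfM !rpredM ?root_of_unity_invAint.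
have sA : m%:R - (a + b) * (c + d) \in Aint.
  by rewrite rpredB ?rpred_nat ?rpredM ?rpredD ?root_of_unity_Aint.
apply: (negP (inv_natr_Aint m_gt1)).
by rewrite (inv_eq_of_quadratic_eq0 m0 u0 E) rpredM.
Qed.
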